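(* Let $r\in\{1,\infty\}$, $N\in\{0,2,3,\ldots\}$, and let $(G,+,p)\in\mathfrak{G}_r(N)$ be a valued group with bounded value. Let $A$ be a nonempty subset of $G$ and $f\in E_r(A)$. If $N>2$, assume that $$\Bigl|p\Bigl(\sum_{k=1}^N a_k\Bigr)-f(a_N)\Bigr|\leqslant\sum_{k=1}^{N-1}f(a_k)\quad\text{for all }a_1,\ldots,a_N\in A.$$ Then there is a valued group $(\tilde G,+,\tilde p)\in\mathfrak{G}_r(N)$ with bounded value enlarging $(G,+,p)$ such that $f$ is trivial in $\tilde G$, i.e. there is $b\in\tilde G$ with $f(a)=\tilde p(a-b)$ for all $a\in A$. If, in addition, $Q\subseteq\mathbb{R}$ satisfies: $Q\cap[0,\infty)$ is dense in $[0,\infty)$, $0\in Q$, and $(Q\cap[0,\infty))+(Q\cap[0,\infty))\subseteq Q$, and moreover $G$ is finite and $p(G)\cup f(A)\subseteq Q$, then $\tilde G$ may be taken finite with $\tilde p(\tilde G)\subseteq Q$.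
   Context: All groups are Abelian. A value on $G$ is $p\colon G\to[0,\infty)$ with $p(x)=0\iff x=0$, $p(-x)=p(x)$, $p(x+y)\leqslant p(x)+p(y)$; it induces the metric $d(x,y)=p(x-y)$. Class $\mathcal{O}_0$: $\lim_n p(na)/n=0$ for all $a$. $\mathfrak{G}_r(N)$: separable valued Abelian groups of class $\mathcal{O}_0$ with $p\leqslant r$ (vacuous if $r=\infty$) and of exponent $N$ if $N\neq0$. For $A\subseteq G$, a Katětov map on $A$ is $f\colon A\to[0,\infty)$ with $|f(x)-f(y)|\leqslant d(x,y)\leqslant f(x)+f(y)$ for all $x,y\in A$; $E_r(A)$ is the set of Katětov maps on $A$ bounded by $r$. Enlarging means $G\subseteq\tilde G$ with addition and value extended. *)

From HB Require Import structures.
From mathcomp Require Import all_boot all_order all_algebra.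
From mathcomp Require Import all_classical all_reals all_analysis.
Set Implicit Arguments. Unset Strict Implicit. Unset Printing Implicit Defensive.
Import numFieldTopology.Exports numFieldNormedType.Exports.
Import Order.TTheory GRing.Theory Num.Theory.
Local Open Scope classical_set_scope.
Local Open Scope ring_scope.

Inductive rparam := r_one | r_inf.

Definition bounded_by_r (R : realType) (r : rparam) (x : R) : Prop :=
  match r with r_one => x <= 1 | r_inf => True end.

Section Defs.
Variables (R : realType) (G : zmodType).

Definition is_value (p : G -> R) : Prop :=
  (forall x, 0 <= p x) /\
  (forall x, p x = 0 <-> x = 0) /\
  (forall x, p (- x) = p x) /\
  (forall x y, p (x + y) <= p x + p y).

Definition value_separable (p : G -> R) : Prop :=
  exists D : set G, countable D /\
    forall x (e : R), 0 < e -> exists2 y, D y & p (x - y) < e.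

Definition class_O0 (p : G -> R) : Prop :=
  forall a : G, (fun n : nat => p (a *+ n) / n%:R) @ \oo --> 0.

Definition has_exponent (N : nat) : Prop :=
  (N <> 0)%N -> forall x : G, x *+ N = 0.

Definition in_frakG (r : rparam) (N : nat) (p : G -> R) : Prop :=
  is_value p /\ value_separable p /\ class_O0 p /\
  (forall x, bounded_by_r r (p x)) /\ has_exponent N.

Definition bounded_value (p : G -> R) : Prop :=
  exists M : R, forall x, p x <= M.

(* Katětov map on A, bounded by r (f ∈ E_r(A)); f is given on all of G but only
   its values on A matter *)
Definition katetov_r (r : rparam) (p : G -> R) (A : set G) (f : G -> R) : Prop :=
  (forall x, A x -> 0 <= f x /\ bounded_by_r r (f x)) /\
  (forall x y, A x -> A y ->
     `|f x - f y| <= p (x - y) /\ p (x - y) <= f x + f y).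

End Defs.

Definition good_enlargement (R : realType) (r : rparam) (N : nat)
    (G : zmodType) (p : G -> R) (A : set G) (f : G -> R)
    (H : zmodType) (q : H -> R) (i : G -> H) : Prop :=
  in_frakG r N q /\ bounded_value q /\
  injective i /\ (forall x y, i (x + y) = i x + i y) /\
  (forall x, q (i x) = p x) /\
  exists b : H, forall a, A a -> f a = q (i a - b).

(* The enlargement is G * int, where (g, k) stands for g + k b with a new
   point b, modulo the null elements of the pseudo-value q (g, k) defined as
   the infimum of the costs of all ways of writing g + k b through elements of
   G, differences a - b with a in A, and multiples of M b (M = N when N <> 0).
   The Katetov inequalities and the N-sum hypothesis (automatic for N = 2,
   where - y = y) say exactly that no such decomposition beats p on G or f a on
   a - b, so G embeds isometrically and f a = q (a - b).  Capping q by a bound c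
   of p and f keeps it bounded, hence of class O_0.  When G is finite and f > 0
   on A, long decompositions cost at least c, so the infimum is a minimum, a
   sum of values of p and f, hence in Q; for N = 0 one may then also kill a
   large multiple of b, which makes the quotient finite.  If f vanishes at some
   a1 in A, then b = a1 already works in G itself. *)

From HB Require Import structures.
From mathcomp Require Import all_boot all_order all_algebra.
From mathcomp Require Import all_classical all_reals all_analysis.
From mathcomp Require Import zify ring lra.
Set Implicit Arguments. Unset Strict Implicit. Unset Printing Implicit Defensive.
Import Order.TTheory GRing.Theory Num.Theory.
Import numFieldTopology.Exports numFieldNormedType.Exports.
Local Open Scope classical_set_scope.
Local Open Scope ring_scope.

Lemma finite_set_min d (T : orderType d) (X : set T) :
  finite_set X -> X !=set0 -> exists2 m, X m & forall y, X y -> (m <= y)%O.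
Proof.
move=> /finite_seqP[s ->]; elim: s => [[]//|z s IH] _.
have [[y ys]|s0] := pselect ([set` s] !=set0); last first.
  exists z => [|w]; first by rewrite /= mem_head.
  by rewrite /= inE => /orP[/eqP->//|ws]; case: s0; exists w.
have [m ms hm] := IH (ex_intro _ y ys).
have [zm|mz] := leP z m.
- exists z => [|w]; first by rewrite /= mem_head.
  by rewrite /= inE => /orP[/eqP->//|/hm]; exact: le_trans.
- exists m => [|w]; first by rewrite /= inE ms orbT.
  by rewrite /= inE => /orP[/eqP->|/hm//]; exact: ltW.
Qed.

Lemma finite_set_max d (T : orderType d) (X : set T) :
  finite_set X -> X !=set0 -> exists2 m, X m & forall y, X y -> (y <= m)%O.
Proof. exact: (@finite_set_min _ T^d). Qed.

Lemma finite_bounded_seqs (T : eqType) (A : set T) (K : nat) : finite_set A ->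
  finite_set [set s : seq T | [set` s] `<=` A /\ (size s <= K)%N].
Proof.
move=> finA; elim: K => [|K IH].
  by apply: sub_finite_set (finite_set1 [::]) => s [_]; rewrite leqn0 => /nilP.
pose S := [set s : seq T | [set` s] `<=` A /\ (size s <= K)%N].
apply: (@sub_finite_set _ _ ([set [::]] `|` (fun xs => xs.1 :: xs.2) @` (A `*` S))).
  move=> [|x s] [sA hs]; [by left | right; exists (x, s) => //].
  split=> /=; first by apply: sA; rewrite /= mem_head.
  by split=> [y ys|//]; apply: sA; rewrite /= inE ys orbT.
by rewrite finite_setU; split; [exact: finite_set1 | apply: finite_image; exact: finite_setX].
Qed.

Lemma cvg_bounded_divn (R : realType) (u : nat -> R) (B : R) :
  (forall n, 0 <= u n <= B) -> (fun n : nat => u n / n%:R) @ \oo --> 0.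
Proof.
move=> hu.
apply: (@squeeze_cvgr _ _ _ _ (fun _ => 0) (fun n => (2 * B) * harmonic n)).
- near=> n.
  have n0 : (0 < n)%N by near: n; exists 1%N.
  have /andP[u0 uB] := hu n.
  rewrite divr_ge0 ?ler0n //=.
  have B0 : 0 <= B by apply: le_trans uB.
  rewrite /harmonic /=.
  have hn : (0 : R) < n%:R by rewrite ltr0n.
  rewrite ler_pdivrMr //; apply: le_trans uB _.
  rewrite mulrAC ler_pdivlMr ?ltr0n // (mulrC 2) -!mulrA.
  apply: ler_wpM2l => //.
  rewrite -natrM ler_nat; lia.
- exact: cvg_cst.
- rewrite -(mulr0 (2 * B)); apply: cvgMl_tmp; exact: cvg_harmonic.
Unshelve. all: end_near.
Qed.

Lemma subset_seq_cons (T : eqType) (A : set T) x l :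
  [set` x :: l] `<=` A -> A x /\ [set` l] `<=` A.
Proof. by move=> h; split=> [|y yl]; apply: h; rewrite /= inE ?eqxx ?yl ?orbT. Qed.

Lemma min_cap_le_add (R : realDomainType) (c u v w : R) :
  0 <= c -> 0 <= v -> 0 <= w -> u <= v + w ->
  Num.min u c <= Num.min v c + Num.min w c.
Proof.
move=> c0 v0 w0 uvw; rewrite ge_min.
have [vc|cv] := leP v c; have [wc|cw] := leP w c.
all: rewrite ?(min_l vc) ?(min_l wc) ?(min_r (ltW cv)) ?(min_r (ltW cw)).
all: by apply/orP; (left; lra) || (right; lra).
Qed.

Lemma pairDE (U V : zmodType) (x y : U * V) : x + y = (x.1 + y.1, x.2 + y.2).
Proof. by case: x y => [? ?] [? ?]. Qed.
Lemma pairBE (U V : zmodType) (x y : U * V) : x - y = (x.1 - y.1, x.2 - y.2).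
Proof. by case: x y => [? ?] [? ?]. Qed.

Lemma exponent2_opp (G : zmodType) : has_exponent G 2 -> forall y : G, - y = y.
Proof. by move=> G2 y; apply/esym/eqP; rewrite -addr_eq0 -mulr2n G2. Qed.

Section ValueFacts.
Variables (R : realType) (G : zmodType) (p : G -> R).
Hypothesis pval : is_value p.

Lemma value_ge0 x : 0 <= p x. Proof. by case: pval. Qed.
Lemma value_eq0 x : (p x = 0) <-> (x = 0). Proof. by case: pval => _ []. Qed.
Lemma value0 : p 0 = 0. Proof. exact/value_eq0. Qed.
Lemma valueN x : p (- x) = p x. Proof. by case: pval => _ [_ []]. Qed.
Lemma valueD x y : p (x + y) <= p x + p y. Proof. by case: pval => _ [_ [_]]. Qed.
Lemma valueB x y : p (x - y) <= p x + p y.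
Proof. by rewrite -(valueN y) valueD. Qed.

Variables (r : rparam) (A : set G) (f : G -> R).
Hypothesis fkat : katetov_r r p A f.

Lemma katetov_ge0 x : A x -> 0 <= f x. Proof. by case: fkat => h _ /h[]. Qed.
Lemma katetov_bounded x : A x -> bounded_by_r r (f x). Proof. by case: fkat => h _ /h[]. Qed.
Lemma katetov_le_value x y : A x -> A y -> f x <= p (x - y) + f y.
Proof.
by move=> hx hy; case: fkat => _ /(_ _ _ hx hy)[+ _]; rewrite ler_norml lerBlDr => /andP[].
Qed.
Lemma katetov_value_le x y : A x -> A y -> p (x - y) <= f x + f y.
Proof. by move=> hx hy; case: fkat => _ /(_ _ _ hx hy)[]. Qed.
End ValueFacts.

Local Open Scope quotient_scope.

Section ValueQuotient.
Variables (R : realType) (T : zmodType) (q : T -> R).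
Hypotheses (q0 : q 0 = 0) (qN : forall x, q (- x) = q x)
  (qD : forall x y, q (x + y) <= q x + q y).

Lemma pseudo_value_ge0 x : 0 <= q x.
Proof.
by have := qD x (- x); rewrite subrr q0 qN; lra.
Qed.

Lemma pseudo_value_null x y : q (x - y) = 0 -> q x = q y.
Proof.
move=> hxy; have hyx : q (y - x) = 0 by rewrite -qN opprB.
apply/eqP; rewrite eq_le; apply/andP; split.
  by have := qD (x - y) y; rewrite subrK hxy add0r.
by have := qD (y - x) x; rewrite subrK hyx add0r.
Qed.

Definition null_rel : rel T := fun x y => `[< q (x - y) = 0 >].

Lemma null_rel_refl : reflexive null_rel.
Proof. by move=> x; apply/asboolP; rewrite subrr q0. Qed.
Lemma null_rel_sym : symmetric null_rel.
Proof. by move=> x y; apply/asboolP/asboolP => h; rewrite -qN opprB. Qed.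
Lemma null_rel_trans : transitive null_rel.
Proof.
move=> y x z /asboolP hxy /asboolP hyz; apply/asboolP/eqP.
rewrite eq_le pseudo_value_ge0 andbT.
by have := qD (x - y) (y - z); rewrite hxy hyz addr0 addrA subrK.
Qed.

Canonical null_equiv := EquivRel null_rel null_rel_refl null_rel_sym null_rel_trans.
Definition vquot := {eq_quot null_equiv}.
HB.instance Definition _ := Choice.on vquot.
Definition vquot_pi : T -> vquot := \pi_vquot.

Lemma vquot_piP x y : vquot_pi x = vquot_pi y <-> q (x - y) = 0.
Proof. by split=> [/eqmodP/asboolP|h]; last apply/eqmodP/asboolP. Qed.

Lemma vquot_piK (a : vquot) : vquot_pi (repr a) = a.
Proof. exact: reprK. Qed.

Lemma vquot_rel_repr x : q (repr (vquot_pi x) - x) = 0.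
Proof. by apply/vquot_piP; rewrite vquot_piK. Qed.

Definition vquot_add (a b : vquot) := vquot_pi (repr a + repr b).
Definition vquot_opp (a : vquot) := vquot_pi (- repr a).

Lemma vquot_addE x y : vquot_add (vquot_pi x) (vquot_pi y) = vquot_pi (x + y).
Proof.
apply/vquot_piP/eqP; rewrite eq_le pseudo_value_ge0 andbT opprD addrACA.
by apply: le_trans (qD _ _) _; rewrite !vquot_rel_repr addr0.
Qed.

Lemma vquot_oppE x : vquot_opp (vquot_pi x) = vquot_pi (- x).
Proof. by apply/vquot_piP; rewrite -opprD qN vquot_rel_repr. Qed.

Lemma vquot_addA : associative vquot_add.
Proof.
move=> a b c; rewrite -(vquot_piK a) -(vquot_piK b) -(vquot_piK c).
by rewrite !vquot_addE addrA.
Qed.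
Lemma vquot_addC : commutative vquot_add.
Proof. by move=> a b; rewrite -(vquot_piK a) -(vquot_piK b) !vquot_addE addrC. Qed.
Lemma vquot_add0 : left_id (vquot_pi 0) vquot_add.
Proof. by move=> a; rewrite -(vquot_piK a) vquot_addE add0r. Qed.
Lemma vquot_addN : left_inverse (vquot_pi 0) vquot_opp vquot_add.
Proof. by move=> a; rewrite -(vquot_piK a) vquot_oppE vquot_addE addNr. Qed.

HB.instance Definition _ :=
  GRing.isZmodule.Build vquot vquot_addA vquot_addC vquot_add0 vquot_addN.

Lemma vquot_piD x y : vquot_pi (x + y) = vquot_pi x + vquot_pi y.
Proof. by rewrite -vquot_addE. Qed.
Lemma vquot_piN x : vquot_pi (- x) = - vquot_pi x.
Proof. by rewrite -vquot_oppE. Qed.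

Lemma vquot_pi0 : vquot_pi 0 = 0. Proof. by []. Qed.

Definition vquot_value (a : vquot) : R := q (repr a).

Lemma vquot_valueE x : vquot_value (vquot_pi x) = q x.
Proof. by rewrite /vquot_value; apply: pseudo_value_null; exact: vquot_rel_repr. Qed.

Lemma vquot_pi_surj (a : vquot) : exists x, a = vquot_pi x.
Proof. by exists (repr a); rewrite vquot_piK. Qed.

Lemma vquot_value_is_value : is_value vquot_value.
Proof.
split; [|split; [|split]].
- by move=> a; have [x ->] := vquot_pi_surj a; rewrite vquot_valueE pseudo_value_ge0.
- move=> a; have [x ->] := vquot_pi_surj a.
  by rewrite vquot_valueE -vquot_pi0 vquot_piP subr0.
- by move=> a; have [x ->] := vquot_pi_surj a; rewrite -vquot_piN !vquot_valueE qN.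
- move=> a b; have [x ->] := vquot_pi_surj a; have [y ->] := vquot_pi_surj b.
  by rewrite -vquot_piD !vquot_valueE qD.
Qed.
End ValueQuotient.

Local Close Scope quotient_scope.

(* With M b = 0, these are forced by q g = p g and q (a - b) = f a, since
   sum_(k < M) a_k = sum_k (a_k - b) and
   a - b = (a + sum_(k < M - 1) a_k) - sum_k (a_k - b). *)
Definition block_inequalities (R : realType) (G : zmodType) (p : G -> R)
    (A : set G) (f : G -> R) (M : nat) : Prop :=
  (forall l : seq G, [set` l] `<=` A -> size l = M ->
     p (\sum_(x <- l) x) <= \sum_(x <- l) f x) /\
  (forall (a : G) (l : seq G), A a -> [set` l] `<=` A -> (size l).+1 = M ->
     f a <= p (a + \sum_(x <- l) x) + \sum_(x <- l) f x).

Section FreeExtension.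
Variables (R : realType) (r : rparam) (G : zmodType) (p : G -> R) (A : set G)
  (f : G -> R) (M : nat).
Hypotheses (pval : is_value p) (fkat : katetov_r r p A f)
  (blocks : block_inequalities p A f M).

Local Notation lsum l := (\sum_(x <- l) x).
Local Notation fsum l := (\sum_(x <- l) f x).

Lemma fsum_ge0 l : [set` l] `<=` A -> 0 <= fsum l.
Proof. by move=> lA; rewrite big_seq sumr_ge0 // => x /lA /(katetov_ge0 fkat). Qed.

Lemma block_sum_le l : [set` l] `<=` A -> (M %| size l)%N -> p (lsum l) <= fsum l.
Proof.
move=> lA /dvdnP[n hl]; elim: n l lA hl => [|n IH] l lA hl.
  by move/size0nil: hl => ->; rewrite !big_nil (value0 pval).
rewrite -(cat_take_drop M l) !big_cat /=.
apply: le_trans (valueD pval _ _) (lerD _ _).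
  by apply: blocks.1 => [x /mem_take/lA//|]; rewrite size_takel // hl mulSn leq_addr.
by apply: IH => [x /mem_drop/lA//|]; rewrite size_drop hl mulSn addKn.
Qed.

Lemma block_shift_le a l : A a -> [set` l] `<=` A -> (M %| (size l).+1)%N ->
  f a <= p (a + lsum l) + fsum l.
Proof.
move=> aA lA /dvdnP[n hl]; elim: n l lA hl => [|n IH] l lA hl //.
have [n0|n0] := posnP n; first by apply: blocks.2; rewrite // hl n0 mul1n.
have hM : (M <= size l)%N by move: hl n0; rewrite mulSn; nia.
set T := take M l; set D := drop M l.
have eS : lsum l = lsum T + lsum D by rewrite -big_cat cat_take_drop.
have eF : fsum l = fsum T + fsum D by rewrite -big_cat cat_take_drop.
have hT : p (lsum T) <= fsum T.
  by apply: blocks.1 => [x /mem_take/lA//|]; rewrite size_takel.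
have hD : f a <= p (a + lsum D) + fsum D.
  by apply: IH => [x /mem_drop/lA//|]; rewrite size_drop; move: hl hM; nia.
apply: le_trans hD _.
have -> : a + lsum D = (a + lsum l) - lsum T by rewrite eS addrA addrAC addrK.
by have := valueB pval (a + lsum l) (lsum T); rewrite eF; lra.
Qed.

Lemma chain_value_le P Nn : [set` P] `<=` A -> [set` Nn] `<=` A ->
  (M%:Z %| (size P)%:Z - (size Nn)%:Z)%Z ->
  p (lsum P - lsum Nn) <= fsum P + fsum Nn.
Proof.
elim: P Nn => [|x P IH] [|y Nn] PA NA hM.
- by rewrite !big_nil subrr (value0 pval) addr0.
- rewrite !big_nil sub0r add0r (valueN pval) //; apply: block_sum_le => //.
  by move: hM; rewrite dvdzE sub0r abszN.
- rewrite !big_nil subr0 addr0; apply: block_sum_le => //.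
  by move: hM; rewrite dvdzE subr0.
- have [xA PA'] := subset_seq_cons PA; have [yA NA'] := subset_seq_cons NA.
  rewrite !big_cons opprD addrACA [X in _ <= X]addrACA.
  apply: le_trans (valueD pval _ _) (lerD (katetov_value_le fkat xA yA) (IH _ PA' NA' _)).
  by move: hM; rewrite /= subzSS.
Qed.

Lemma chain_katetov_le a P Nn : A a -> [set` P] `<=` A -> [set` Nn] `<=` A ->
  (M%:Z %| (size P)%:Z + 1 - (size Nn)%:Z)%Z ->
  f a <= p (a + lsum P - lsum Nn) + fsum P + fsum Nn.
Proof.
move=> aA; elim: P Nn => [|x P IH] [|y Nn] PA NA hM.
- have := @block_shift_le a [::] aA PA; rewrite !big_nil !addr0 subr0; apply.
  by move: hM; rewrite dvdzE.
- have [yA NA'] := subset_seq_cons NA.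
  rewrite !big_nil !addr0 !big_cons.
  apply: le_trans (katetov_le_value fkat aA yA) _.
  have hN : p (lsum Nn) <= fsum Nn.
    apply: block_sum_le => //.
    by move: hM; rewrite /= dvdzE intS add0r opprD addrA subrr sub0r abszN.
  have e : a - (y + lsum Nn) + lsum Nn = a - y by rewrite opprD addrA subrK.
  by have := valueD pval (a - (y + lsum Nn)) (lsum Nn); rewrite e; lra.
- rewrite big_nil subr0 big_nil addr0; apply: block_shift_le => //.
  by move: hM; rewrite dvdzE subr0 -PoszD addn1.
- have [xA PA'] := subset_seq_cons PA; have [yA NA'] := subset_seq_cons NA.
  have hPN : f a <= p (a + lsum P - lsum Nn) + fsum P + fsum Nn.
    by apply: IH => //; move: hM; rewrite /= addrAC subzSS addrAC.
  apply: le_trans hPN _; rewrite !big_cons.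
  have e : a + (x + lsum P) - (y + lsum Nn) = a + lsum P - lsum Nn + (x - y).
    by rewrite opprD [a + (x + _)]addrCA addrACA addrC.
  rewrite -[a + lsum P - lsum Nn](addrK (x - y)) -e.
  have := valueB pval (a + (x + lsum P) - (y + lsum Nn)) (x - y).
  have := katetov_value_le fkat xA yA; lra.
Qed.

Variable c : R.
Hypotheses (pc : forall x, p x <= c) (fc : forall a, A a -> f a <= c) (A0 : A !=set0).

(* The chain (P, Nn) writes g + k b as (g - sum P + sum Nn)
   + sum_(a in P) (a - b) - sum_(a in Nn) (a - b) + j M b. *)
Definition chain_cost (x : G * int) (P Nn : seq G) : R :=
  p (x.1 - lsum P + lsum Nn) + fsum P + fsum Nn.

Definition admissible_chain (x : G * int) (P Nn : seq G) : Prop :=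
  [/\ [set` P] `<=` A, [set` Nn] `<=` A & (M%:Z %| x.2 + (size P)%:Z - (size Nn)%:Z)%Z].

Definition chain_values (x : G * int) : set R :=
  [set v | exists P Nn, admissible_chain x P Nn /\ v = Num.min (chain_cost x P Nn) c].

Definition free_value (x : G * int) : R := inf (chain_values x).

Lemma cap_ge0 : 0 <= c.
Proof. by apply: le_trans (pc 0); rewrite (value0 pval). Qed.

Lemma chain_cost_ge0 x P Nn : admissible_chain x P Nn -> 0 <= chain_cost x P Nn.
Proof. by case=> PA NA _; rewrite !addr_ge0 ?fsum_ge0 ?(value_ge0 pval). Qed.

Lemma chain_values_ge0 x v : chain_values x v -> 0 <= v.
Proof. by case=> P [Nn [hx ->]]; rewrite le_min chain_cost_ge0 ?cap_ge0. Qed.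

Lemma chain_values_nonempty x : chain_values x !=set0.
Proof.
have [a0 a0A] := A0; have nseqA n : [set` nseq n a0] `<=` A by move=> y /nseqP[->].
case: x => g [] n.
  exists (Num.min (chain_cost (g, Posz n) [::] (nseq n a0)) c).
  by exists [::], (nseq n a0); split=> //; split; rewrite ?size_nseq ?addr0 ?subrr.
exists (Num.min (chain_cost (g, Negz n) (nseq n.+1 a0) [::]) c).
by exists (nseq n.+1 a0), [::]; split=> //; split; rewrite ?size_nseq ?NegzE ?subr0 ?addNr.
Qed.

Lemma free_value_le x v : chain_values x v -> free_value x <= v.
Proof. by move=> hv; apply: ge_inf => //; exists 0 => w /chain_values_ge0. Qed.

Lemma free_value_ge x e : (forall v, chain_values x v -> e <= v) -> e <= free_value x.
Proof. exact/lb_le_inf/chain_values_nonempty. Qed.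

Lemma free_value_ge0 x : 0 <= free_value x.
Proof. exact/free_value_ge/chain_values_ge0. Qed.

Lemma free_value_le_cap x : free_value x <= c.
Proof.
have [v hv] := chain_values_nonempty x; apply: le_trans (free_value_le hv) _.
by case: hv => P [Nn [_ ->]]; rewrite ge_min lexx orbT.
Qed.

Lemma free_value_null k : (M%:Z %| k)%Z -> free_value (0, k) = 0.
Proof.
move=> Mk; apply/eqP; rewrite eq_le free_value_ge0 andbT.
apply: free_value_le; exists [::], [::]; split; first by split; rewrite //= addr0 subr0.
by rewrite /chain_cost !big_nil !addr0 subr0 (value0 pval) (min_l cap_ge0).
Qed.

Lemma chain_values_opp x v : chain_values x v -> chain_values (- x) v.
Proof.
case: x => g k [P [Nn [[PA NA hM] ->]]]; exists Nn, P; split.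
  split=> //=; have -> : - k + (size Nn)%:Z - (size P)%:Z =
    - (k + (size P)%:Z - (size Nn)%:Z) by ring.
  by rewrite rpredN.
suff -> : chain_cost (- (g, k)) Nn P = chain_cost (g, k) P Nn by [].
rewrite /chain_cost /= [RHS]addrAC; congr (_ + _ + _).
by rewrite -(valueN pval) !opprD !opprK addrAC.
Qed.

Lemma free_valueN x : free_value (- x) = free_value x.
Proof.
have le y : free_value (- y) <= free_value y.
  by apply: free_value_ge => v /chain_values_opp; exact: free_value_le.
by apply/eqP; rewrite eq_le le /= -{1}(opprK x) le.
Qed.

Lemma chain_cost_cat (g g' : G) (k k' : int) (P P' Nn Nn' : seq G) :
  chain_cost (g + g', k + k') (P ++ P') (Nn ++ Nn')
  <= chain_cost (g, k) P Nn + chain_cost (g', k') P' Nn'.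
Proof.
rewrite /chain_cost /= !big_cat /=.
have -> : g + g' - (lsum P + lsum P') + (lsum Nn + lsum Nn') =
    (g - lsum P + lsum Nn) + (g' - lsum P' + lsum Nn').
  by rewrite opprD [g + g' + _]addrACA [LHS]addrACA.
by have := valueD pval (g - lsum P + lsum Nn) (g' - lsum P' + lsum Nn'); lra.
Qed.

Lemma chain_values_add x y v w : chain_values x v -> chain_values y w ->
  exists2 u, chain_values (x + y) u & u <= v + w.
Proof.
case: x y => [g k] [g' k'] [P [Nn [hx ->]]] [P' [Nn' [hy ->]]].
exists (Num.min (chain_cost (g + g', k + k') (P ++ P') (Nn ++ Nn')) c).
  exists (P ++ P'), (Nn ++ Nn'); split=> //.
  case: hx hy => PA NA hM [P'A N'A hM']; split.
  - by move=> z; rewrite /= mem_cat => /orP[/PA|/P'A].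
  - by move=> z; rewrite /= mem_cat => /orP[/NA|/N'A].
  - move: (rpredD hM hM'); rewrite /= !size_cat !PoszD.
    by congr (_ %| _)%Z; ring.
apply: min_cap_le_add; rewrite ?cap_ge0 ?chain_cost_ge0 //.
exact: chain_cost_cat.
Qed.

Lemma free_valueD x y : free_value (x + y) <= free_value x + free_value y.
Proof.
have le v w : chain_values x v -> chain_values y w -> free_value (x + y) <= v + w.
  move=> xv yw; have [u xyu uvw] := chain_values_add xv yw.
  exact: le_trans (free_value_le xyu) uvw.
rewrite -lerBlDl; apply: free_value_ge => w yw; rewrite lerBlDl -lerBlDr.
by apply: free_value_ge => v xv; rewrite lerBlDr; exact: le.
Qed.

Lemma free_value_embed g : free_value (g, 0) = p g.
Proof.
apply/eqP; rewrite eq_le; apply/andP; split.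
  apply: free_value_le; exists [::], [::]; split; first by split; rewrite //= !addr0.
  by rewrite /chain_cost !big_nil !addr0 subr0 (min_l (pc g)).
apply: free_value_ge => v [P [Nn [[PA NA hM] ->]]].
rewrite le_min pc andbT /chain_cost /=.
have hPN := chain_value_le PA NA; move: hM; rewrite /= add0r => /hPN {}hPN.
have e : g - lsum P + lsum Nn + (lsum P - lsum Nn) = g.
  by rewrite addrACA subrK subrr addr0.
by have := valueD pval (g - lsum P + lsum Nn) (lsum P - lsum Nn); rewrite e; lra.
Qed.

Lemma free_value_katetov a : A a -> free_value (a, -1) = f a.
Proof.
move=> aA; apply/eqP; rewrite eq_le; apply/andP; split.
  apply: free_value_le; exists [:: a], [::]; split.
    by split=> [z|//|]; rewrite /= ?inE ?subr0 ?addNr // => /eqP->.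
  by rewrite /chain_cost /= !big_cons !big_nil !addr0 subrr (value0 pval) add0r
    (min_l (fc aA)).
apply: free_value_ge => v [P [Nn [[PA NA hM] ->]]].
rewrite le_min fc // andbT /chain_cost /=.
have : f a <= p (a + lsum Nn - lsum P) + fsum Nn + fsum P.
  apply: chain_katetov_le => //; have -> : (size Nn)%:Z + 1 - (size P)%:Z =
    - (-1 + (size P)%:Z - (size Nn)%:Z) by ring.
  by rewrite rpredN.
by move/le_trans; apply; rewrite [a + lsum Nn - _]addrAC [X in _ <= X]addrAC.
Qed.

Lemma fsum_ge_size (d : R) (l : seq G) : (forall a, A a -> d <= f a) -> [set` l] `<=` A ->
  (size l)%:R * d <= fsum l.
Proof.
move=> hd; elim: l => [_|x l IH /subset_seq_cons[xA lA]]; first by rewrite big_nil mul0r.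
by rewrite big_cons /= -add1n natrD mulrDl mul1r lerD ?hd ?IH.
Qed.

Lemma fsum_ge_cap (d : R) (K : nat) (l : seq G) : (forall a, A a -> d <= f a) -> 0 <= d ->
  c <= K%:R * d -> [set` l] `<=` A -> (K <= size l)%N -> c <= fsum l.
Proof.
move=> hd d0 cK lA Kl; apply: le_trans cK (le_trans _ (fsum_ge_size hd lA)).
by rewrite ler_wpM2r // ler_nat.
Qed.

Lemma free_value_attained (d : R) (K : nat) : finite_set A ->
  0 <= d -> (forall a, A a -> d <= f a) -> c <= K%:R * d ->
  forall x, chain_values x (free_value x).
Proof.
move=> Afin d0 hd cK x.
pose S := [set l : seq G | [set` l] `<=` A /\ (size l <= K)%N].
have long l : [set` l] `<=` A -> (K < size l)%N -> c <= fsum l.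
  by move=> lA Kl; exact: fsum_ge_cap hd d0 cK lA (ltnW Kl).
have fin : finite_set (chain_values x).
  apply: (@sub_finite_set _ _
    (c |` (fun PN => Num.min (chain_cost x PN.1 PN.2) c) @` (S `*` S))); last first.
    rewrite finite_setU; split; first exact: finite_set1.
    by apply/finite_image/finite_setX; exact: finite_bounded_seqs.
  move=> _ [P [Nn [[PA NA hM] ->]]].
  have cost := value_ge0 pval (x.1 - lsum P + lsum Nn).
  have := fsum_ge0 PA; have := fsum_ge0 NA; rewrite /chain_cost => P0 N0.
  have [PK|/(long _ PA) KP] := leqP (size P) K; last by left; apply/min_r; lra.
  have [NK|/(long _ NA) KN] := leqP (size Nn) K; last by left; apply/min_r; lra.
  by right; exists (P, Nn).
have [m xm hm] := finite_set_min fin (chain_values_nonempty x).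
suff -> : free_value x = m by [].
by apply/eqP; rewrite eq_le free_value_le //=; exact: free_value_ge.
Qed.

Lemma free_value_in (Q : set R) : Q 0 ->
  (forall u v, Q u -> 0 <= u -> Q v -> 0 <= v -> Q (u + v)) ->
  (forall x, Q (p x)) -> (forall a, A a -> Q (f a)) -> Q c ->
  forall x, chain_values x (free_value x) -> Q (free_value x).
Proof.
move=> Q0 QD Qp Qf Qc x [P [Nn [[PA NA _] ->]]].
have Qfsum l : [set` l] `<=` A -> Q (fsum l).
  elim: l => [_|z l IH /subset_seq_cons[zA lA]]; first by rewrite big_nil.
  rewrite big_cons; apply: (QD); [exact: Qf | exact: katetov_ge0 fkat _ zA |
    exact: IH | exact: fsum_ge0].
have Qcost : Q (chain_cost x P Nn).
  apply: (QD); [|by rewrite addr_ge0 ?fsum_ge0 ?(value_ge0 pval) | exact: Qfsum |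
    exact: fsum_ge0].
  apply: (QD); [exact: Qp | exact: value_ge0 pval _ | exact: Qfsum | exact: fsum_ge0].
by have [|] := leP (chain_cost x P Nn) c.
Qed.

Let free_value0 : free_value 0 = 0 := free_value_null (dvdz0 _).

Definition free_ext := vquot free_value0 free_valueN free_valueD.
Definition free_pi : G * int -> free_ext :=
  @vquot_pi _ _ _ free_value0 free_valueN free_valueD.
Definition free_ext_value : free_ext -> R :=
  @vquot_value _ _ _ free_value0 free_valueN free_valueD.
Definition free_embed (g : G) : free_ext := free_pi (g, 0).

Lemma free_piP x y : free_pi x = free_pi y <-> free_value (x - y) = 0.
Proof. exact: vquot_piP. Qed.
Lemma free_ext_valueE x : free_ext_value (free_pi x) = free_value x.
Proof. exact: vquot_valueE. Qed.
Lemma free_pi_surj (y : free_ext) : exists x, y = free_pi x.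
Proof. exact: vquot_pi_surj. Qed.
Lemma free_piD x y : free_pi (x + y) = free_pi x + free_pi y.
Proof. exact: vquot_piD. Qed.
Lemma free_piN x : free_pi (- x) = - free_pi x.
Proof. exact: vquot_piN. Qed.
Lemma free_piMn x n : free_pi (x *+ n) = free_pi x *+ n.
Proof. by elim: n => [//|n IH]; rewrite !mulrS free_piD IH. Qed.

Lemma free_ext_value_ge0 y : 0 <= free_ext_value y.
Proof. by have [x ->] := free_pi_surj y; rewrite free_ext_valueE free_value_ge0. Qed.
Lemma free_ext_value_le_cap y : free_ext_value y <= c.
Proof. by have [x ->] := free_pi_surj y; rewrite free_ext_valueE free_value_le_cap. Qed.

Lemma free_ext_separable : value_separable p -> value_separable free_ext_value.
Proof.
case=> D [Dcount hD]; exists (free_pi @` (D `*` [set: int])); split.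
  by apply: card_le_trans (card_image_le _ _) _; apply: countableX => //; exact: countableP.
move=> y e e0; have [[g k] ->] := free_pi_surj y; have [h hD' hgh] := hD g e e0.
exists (free_pi (h, k)); first by exists (h, k).
by rewrite -free_piN -free_piD free_ext_valueE pairBE /= subrr free_value_embed.
Qed.

Lemma free_ext_exponent N : has_exponent G N -> ((N <> 0)%N -> (M %| N)%N) ->
  has_exponent free_ext N.
Proof.
move=> GN MN N0 y; have [[g k] ->] := free_pi_surj y.
rewrite -free_piMn pairMnE /= GN //; apply/free_piP; rewrite subr0 free_value_null //.
by rewrite -mulr_natr dvdz_mull // natz dvdzE; exact: MN.
Qed.

Lemma free_ext_good N : value_separable p -> has_exponent G N ->
  ((N <> 0)%N -> (M %| N)%N) -> bounded_by_r r c ->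
  good_enlargement r N p A f free_ext_value free_embed.
Proof.
move=> psep GN MN rc; split; [|split; [|split; [|split; [|split]]]].
- split; first exact: vquot_value_is_value.
  split; first exact: free_ext_separable.
  split.
    move=> y; apply: (@cvg_bounded_divn _ _ c) => n.
    by rewrite free_ext_value_ge0 free_ext_value_le_cap.
  split; last exact: free_ext_exponent.
  by case: r rc => //= c1 y; apply: le_trans c1; exact: free_ext_value_le_cap.
- by exists c; exact: free_ext_value_le_cap.
- move=> g h /free_piP; rewrite pairBE /= subrr free_value_embed.
  by move/(value_eq0 pval)/eqP; rewrite subr_eq0 => /eqP.
- by move=> g h; rewrite /free_embed -free_piD pairDE /= addr0.
- by move=> g; rewrite free_ext_valueE free_value_embed.
- exists (free_pi (0, 1)) => a aA.
  by rewrite -free_piN -free_piD free_ext_valueE pairBE /= subr0 sub0r free_value_katetov.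
Qed.

Lemma free_ext_finite : finite_set [set: G] -> (0 < M)%N -> finite_set [set: free_ext].
Proof.
move=> Gfin M0.
apply: (@sub_finite_set _ _ (free_pi @` ([set: G] `*` (Posz @` `I_M)))); last first.
  by apply/finite_image/finite_setX => //; apply/finite_image/finite_II.
move=> y _; have [[g k] ->] := free_pi_surj y.
have MZ : M%:Z != 0 by rewrite eqz_nat -lt0n.
have := modz_ge0 k MZ; have : (k %% M%:Z < M%:Z)%Z by rewrite ltz_pmod ?ltz_nat.
case E : (k %% M%:Z)%Z => [n|//] nM _.
exists (g, Posz n); first by split=> //; exists n => //=; rewrite -ltz_nat.
apply/free_piP; rewrite pairBE /= subrr free_value_null //.
have -> : Posz n - k = - ((k %/ M%:Z)%Z * M%:Z) by rewrite -E {2}(divz_eq k M%:Z); ring.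
by rewrite rpredN dvdz_mull.
Qed.

Lemma free_ext_value_in (Q : set R) : Q 0 ->
  (forall u v, Q u -> 0 <= u -> Q v -> 0 <= v -> Q (u + v)) ->
  (forall x, Q (p x)) -> (forall a, A a -> Q (f a)) -> Q c ->
  (forall x, chain_values x (free_value x)) -> forall y, Q (free_ext_value y).
Proof.
move=> Q0 QD Qp Qf Qc att y; have [x ->] := free_pi_surj y.
by rewrite free_ext_valueE; apply: free_value_in.
Qed.

End FreeExtension.

Section BlockInequalities.
Variables (R : realType) (r : rparam) (G : zmodType) (p : G -> R) (A : set G)
  (f : G -> R).
Hypotheses (pval : is_value p) (fkat : katetov_r r p A f).

Local Notation lsum l := (\sum_(x <- l) x).
Local Notation fsum l := (\sum_(x <- l) f x).

Lemma sum_condition_seq N :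
  (forall a : nat -> G, (forall k, (1 <= k <= N)%N -> A (a k)) ->
     `|p (\sum_(1 <= k < N.+1) a k) - f (a N)| <= \sum_(1 <= k < N) f (a k)) ->
  forall (l : seq G) (a : G), [set` l] `<=` A -> A a -> (size l).+1 = N ->
  `|p (lsum l + a) - f a| <= fsum l.
Proof.
move=> hsum l a lA aA sN; set s := rcons l a.
have ss : size s = N by rewrite size_rcons.
have sumS : lsum s = lsum l + a by rewrite /s -cats1 big_cat big_seq1.
have sumN : \sum_(1 <= k < N.+1) nth a s k.-1 = lsum l + a.
  by rewrite -sumS -ss big_add1 /= [RHS](big_nth a).
have fsumN : \sum_(1 <= k < N) f (nth a s k.-1) = fsum l.
  rewrite -sN big_add1 /= [RHS](big_nth a); apply: eq_big_nat => k /andP[_ kl].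
  by rewrite nth_rcons kl.
have lastN : nth a s N.-1 = a by rewrite -ss nth_last last_rcons.
have sA k : (1 <= k <= N)%N -> A (nth a s k.-1).
  move=> /andP[k1 kN]; rewrite nth_rcons; case: ltnP => [kl|_]; first exact/lA/mem_nth.
  by case: eqP.
by have := hsum _ sA; rewrite sumN fsumN lastN.
Qed.

Lemma block_inequalities_of_sum_condition N :
  N <> 1%N -> has_exponent G N ->
  ((2 < N)%N -> forall a : nat -> G, (forall k, (1 <= k <= N)%N -> A (a k)) ->
     `|p (\sum_(1 <= k < N.+1) a k) - f (a N)| <= \sum_(1 <= k < N) f (a k)) ->
  block_inequalities p A f N.
Proof.
move=> N1 GN hsum; have [->|N0] := eqVneq N 0%N.
  by split=> [l _ /size0nil->|//]; rewrite !big_nil (value0 pval).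
have [N2|N2] := eqVneq N 2%N.
  move: GN; rewrite N2 => /exponent2_opp oppG.
  split=> [[|x [|y []]] //= lA _|a [|y []] //= aA lA _].
    have [xA /subset_seq_cons[yA _]] := subset_seq_cons lA.
    rewrite !big_cons !big_nil !addr0 -{1}(oppG y).
    exact (katetov_value_le fkat xA yA).
  have [yA _] := subset_seq_cons lA.
  rewrite !big_cons !big_nil !addr0 -{1}(oppG y).
  exact (katetov_le_value fkat aA yA).
have N3 : (2 < N)%N by move: N0 N2 N1; rewrite -lt0n; lia.
have {}hsum := sum_condition_seq (hsum N3).
split=> [l lA sl|a l aA lA sl].
  case/lastP: l lA sl => [_ sl|l z lA]; first by move: N0; rewrite -sl.
  rewrite size_rcons -cats1 !big_cat !big_seq1 /= => sl.
  have [zA l'A] : A z /\ [set` l] `<=` A.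
    by split=> [|x xl]; apply: lA; rewrite /= mem_rcons inE ?eqxx ?xl ?orbT.
  by have := hsum l z l'A zA sl; rewrite ler_norml => /andP[_]; lra.
by have := hsum l a lA aA sl; rewrite ler_norml [a + _]addrC => /andP[+ _]; lra.
Qed.

Lemma block_inequalities_long (d c : R) (K : nat) : 0 <= d -> (forall a, A a -> d <= f a) ->
  (forall x, p x <= c) -> (forall a, A a -> f a <= c) -> c <= K%:R * d ->
  block_inequalities p A f K.+1.
Proof.
move=> d0 hd pc fc cK; split=> [l lA sl|a l aA lA [sl]].
  by apply: le_trans (pc _) (fsum_ge_cap hd d0 cK lA _); rewrite sl.
apply: le_trans (fc _ aA) (le_trans (fsum_ge_cap hd d0 cK lA _) _); first by rewrite sl.
by rewrite lerDr (value_ge0 pval).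
Qed.

Lemma katetov_zero_trivial a1 : A a1 -> f a1 = 0 -> forall a, A a -> f a = p (a - a1).
Proof.
move=> a1A f0 a aA; apply/eqP; rewrite eq_le.
have := katetov_le_value fkat aA a1A; have := katetov_value_le fkat aA a1A.
by rewrite f0 !addr0 => -> ->.
Qed.
End BlockInequalities.

Lemma exists_cap (R : realType) r N (G : zmodType) (p : G -> R) (A : set G) f a0 :
  in_frakG r N p -> bounded_value p -> katetov_r r p A f -> A a0 ->
  exists c, [/\ forall x, p x <= c, forall a, A a -> f a <= c & bounded_by_r r c].
Proof.
case=> pval [_ [_ [pr _]]] [B pB] fkat a0A; case: r pr fkat => pr fkat.
  by exists 1; split=> [x|a /(katetov_bounded fkat)//|]; [exact: pr | exact: lexx].
exists (B + f a0); split=> // [x|a aA].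
  by have := katetov_ge0 fkat a0A; have := pB x; lra.
by apply: le_trans (katetov_le_value fkat aA a0A) _; rewrite lerD2r.
Qed.

Lemma trivial_enlargement (R : realType) r N (G : zmodType) (p : G -> R) (A : set G) f a1 :
  in_frakG r N p -> bounded_value p -> katetov_r r p A f -> A a1 -> f a1 = 0 ->
  good_enlargement r N p A f p id.
Proof.
move=> hG pB fkat a1A f0; do 5 split=> //.
by exists a1; exact (katetov_zero_trivial fkat a1A f0).
Qed.

Lemma enlargement_exists (R : realType) r N (G : zmodType) (p : G -> R) (A : set G) f :
  in_frakG r N p -> bounded_value p -> A !=set0 -> katetov_r r p A f ->
  block_inequalities p A f N ->
  exists (H : zmodType) (q : H -> R) (i : G -> H), good_enlargement r N p A f q i.
Proof.
move=> hG pB A0 fkat blocks; have [pval [psep [_ [_ GN]]]] := hG.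
have [a0 a0A] := A0; have [c [pc fc rc]] := exists_cap hG pB fkat a0A.
have HG := free_ext_good pval fkat blocks pc fc A0 psep GN (fun=> dvdnn N) rc.
by do 3 eexists; apply: HG.
Qed.

Lemma exists_finite_cap (R : realType) r N (G : zmodType) (p : G -> R) (A : set G) f :
  in_frakG r N p -> katetov_r r p A f -> finite_set [set: G] ->
  exists c, [/\ forall x, p x <= c, forall a, A a -> f a <= c, bounded_by_r r c
    & (range p `|` f @` A) c].
Proof.
case=> _ [_ [_ [pr _]]] fkat Gfin.
have Afin : finite_set A := sub_finite_set (@subsetT _ A) Gfin.
have Xfin : finite_set (range p `|` f @` A).
  by rewrite finite_setU; split; apply: finite_image.
have X0 : (range p `|` f @` A) !=set0 by exists (p 0); left; exists 0.
have [c Xc hc] := finite_set_max Xfin X0.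
exists c; split=> [x|a aA||//]; first (by apply: hc; left; exists x); first by apply: hc; right; exists a.
by case: Xc => [[x _ <-]|[a aA <-]]; [exact: pr | exact (katetov_bounded fkat aA)].
Qed.

Lemma finite_enlargement_pos (R : realType) r N (G : zmodType) (p : G -> R) (A : set G) f
    (Q : set R) :
  in_frakG r N p -> A !=set0 -> katetov_r r p A f -> block_inequalities p A f N ->
  (forall a, A a -> 0 < f a) ->
  Q 0 -> (forall u v, Q u -> 0 <= u -> Q v -> 0 <= v -> Q (u + v)) ->
  finite_set [set: G] -> (forall x, Q (p x)) -> (forall a, A a -> Q (f a)) ->
  exists (H : zmodType) (q : H -> R) (i : G -> H),
    good_enlargement r N p A f q i /\ finite_set [set: H] /\ (forall y, Q (q y)).
Proof.
move=> hG A0 fkat blocksN fpos Q0 QD Gfin Qp Qf.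
have [pval [psep [_ [_ GN]]]] := hG.
have Afin : finite_set A := sub_finite_set (@subsetT _ A) Gfin.
have fA0 : (f @` A) !=set0 by case: A0 => a0 a0A; exists (f a0), a0.
have [_ [a1 a1A <-] hd] := finite_set_min (finite_image f Afin) fA0.
have {}hd a : A a -> f a1 <= f a by move=> aA; apply: hd; exists a.
have d0 := fpos _ a1A.
have [c [pc fc rc Xc]] := exists_finite_cap hG fkat Gfin.
have Qc : Q c by case: Xc => [[x _ <-]|[a aA <-]]; [exact: Qp | exact: Qf].
have [K cK] : exists K : nat, c <= K%:R * f a1.
  exists (Num.Def.archi_bound (c / f a1)); rewrite -ler_pdivrMr // ltW // archi_boundP //.
  by apply: divr_ge0; [exact: le_trans (value_ge0 pval 0) (pc 0) | exact: ltW].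
(* For N = 0 the relation (K + 1) b = 0 is free: K elements of A already cost c. *)
pose M := if N == 0%N then K.+1 else N.
have blocks : block_inequalities p A f M.
  by rewrite /M; case: eqP => // _; exact (block_inequalities_long pval (ltW d0) hd pc fc cK).
have MN : (N <> 0)%N -> (M %| N)%N by rewrite /M; case: eqP.
have M0 : (0 < M)%N by rewrite /M; case: eqP => // /eqP; rewrite lt0n.
have HG := free_ext_good pval fkat blocks pc fc A0 psep GN MN rc.
do 3 eexists; split; first apply: HG.
split; first exact (free_ext_finite pval fkat pc A0 Gfin M0).
apply: free_ext_value_in => //.
exact (free_value_attained M pval fkat pc A0 Afin (ltW d0) hd cK).
Qed.

Lemma finite_enlargement_exists (R : realType) r N (G : zmodType) (p : G -> R) (A : set G)
    f (Q : set R) :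
  in_frakG r N p -> bounded_value p -> A !=set0 -> katetov_r r p A f ->
  block_inequalities p A f N ->
  Q 0 -> (forall u v, Q u -> 0 <= u -> Q v -> 0 <= v -> Q (u + v)) ->
  finite_set [set: G] -> (forall x, Q (p x)) -> (forall a, A a -> Q (f a)) ->
  exists (H : zmodType) (q : H -> R) (i : G -> H),
    good_enlargement r N p A f q i /\ finite_set [set: H] /\ (forall y, Q (q y)).
Proof.
move=> hG pB A0 fkat blocks Q0 QD Gfin Qp Qf.
have [[a1 [a1A f0]]|fpos] := pselect (exists a1, A a1 /\ f a1 = 0).
  by exists G, p, id; split; [exact: trivial_enlargement hG pB fkat a1A f0 | split].
apply: (finite_enlargement_pos hG A0 fkat blocks _ Q0 QD Gfin Qp Qf) => a aA.
rewrite lt_neqAle (katetov_ge0 fkat aA) andbT; apply/eqP => /esym fa0.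
by apply: fpos; exists a.
Qed.

Unset Implicit Arguments. Set Strict Implicit. Set Printing Implicit Defensive.

Theorem theorem2p17 (R : realType) (r : rparam) (N : nat) (G : zmodType)
    (p : G -> R) (A : set G) (f : G -> R) :
  N <> 1%N ->
  in_frakG r N p -> bounded_value p ->
  A !=set0 -> katetov_r r p A f ->
  ((2 < N)%N -> forall a : nat -> G, (forall k, (1 <= k <= N)%N -> A (a k)) ->
     `|p (\sum_(1 <= k < N.+1) a k) - f (a N)| <= \sum_(1 <= k < N) f (a k)) ->
  (exists (H : zmodType) (q : H -> R) (i : G -> H),
      good_enlargement r N p A f q i) /\
  (forall Q : set R,
      [set x : R | 0 <= x] `<=` closure (Q `&` [set x : R | 0 <= x]) ->
      Q 0 ->
      (forall x y, Q x -> 0 <= x -> Q y -> 0 <= y -> Q (x + y)) ->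
      finite_set [set: G] ->
      (forall x, Q (p x)) -> (forall a, A a -> Q (f a)) ->
      exists (H : zmodType) (q : H -> R) (i : G -> H),
        good_enlargement r N p A f q i /\
        finite_set [set: H] /\ (forall y, Q (q y))).
Proof.
move=> N1 hG pB A0 fkat hsum; have [pval [_ [_ [_ GN]]]] := hG.
have blocks := block_inequalities_of_sum_condition pval fkat N1 GN hsum.
split; first exact: enlargement_exists hG pB A0 fkat blocks.
move=> Q _ Q0 QD Gfin Qp Qf.
exact: finite_enlargement_exists hG pB A0 fkat blocks Q0 QD Gfin Qp Qf.
Qed.
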